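(* Let $m\ge n$, $c_1,\dots,c_m>0$, positive integers $n_i\le n$ with $\sum_i c_in_i=n$, and surjective linear maps $B_i:\mathbb{R}^n\to\mathbb{R}^{n_i}$ with $\bigcap_i\ker B_i=\{0\}$. With $I$, $J$ as defined in the context, set $$E_g=\inf\Big\{\frac{I((g_i)_{i=1}^m)}{\prod_{i=1}^m(\int_{\mathbb{R}^{n_i}} g_i)^{c_i}}\Big\},\qquad F_g=\sup\Big\{\frac{J((g_i)_{i=1}^m)}{\prod_{i=1}^m(\int_{\mathbb{R}^{n_i}} g_i)^{c_i}}\Big\},$$ the infimum and supremum taken over all $m$-tuples with each $g_i$ a centered Gaussian function on $\mathbb{R}^{n_i}$. Then $E_g\cdot F_g=1$, and $E_g=0$ if and only if $F_g=+\infty$.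
   Context: For non-negative integrable $f_i$ on $\mathbb{R}^{n_i}$: $I((f_i)_{i=1}^m)=\int^*_{\mathbb{R}^n}\sup\{\prod_i f_i^{c_i}(y_i);\ \sum_i c_iB_i^*y_i=x,\ y_i\in\mathbb{R}^{n_i}\}\,dx$ (outer integral) and $J((f_i)_{i=1}^m)=\int_{\mathbb{R}^n}\prod_i f_i^{c_i}(B_ix)\,dx$. $B_i^*$ is the Euclidean adjoint. A centered Gaussian function on $\mathbb{R}^k$ is $x\mapsto\exp(-\langle Ax,x\rangle)$ with $A$ a symmetric positive definite $k\times k$ matrix. *)

From HB Require Import structures.
From mathcomp Require Import all_boot all_order all_algebra.
From mathcomp Require Import all_classical all_reals all_analysis.
Set Implicit Arguments. Unset Strict Implicit. Unset Printing Implicit Defensive.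
Import Order.TTheory GRing.Theory Num.Theory.
Local Open Scope classical_set_scope.
Local Open Scope ring_scope.

(* R^k is modelled by row vectors 'rV[R]_k; a linear map R^n -> R^k is a
   matrix B : 'M[R]_(n, k) acting by x |-> x *m B.  Its Euclidean adjoint is
   y |-> y *m B^T.  <u, v> = (u *m v^T) 0 0. *)

Definition dotv (R : realType) (k : nat) (u v : 'rV[R]_k) : R := (u *m v^T) 0 0.

Fixpoint iter_int (R : realType) (k : nat) (f : seq R -> \bar R) : \bar R :=
  match k with
  | 0 => f [::]
  | k'.+1 => (\int[@lebesgue_measure R]_t iter_int k' (fun s => f (t :: s)))%E
  end.

(* Lebesgue integral over R^k of a non-negative Borel function
   (by Tonelli, it equals the iterated integral). *)
Definition int_Rn (R : realType) (k : nat) (f : 'rV[R]_k -> \bar R) : \bar R :=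
  iter_int k (fun s => f (\row_(i < k) nth 0 s i)).

Definition borel_fun (R : realType) (k : nat) (h : 'rV[R]_k -> \bar R) : Prop :=
  forall t : R, <<s [set A : set 'rV[R^o]_k | open A] >> [set x | (t%:E < h x)%E].

Definition outer_int (R : realType) (k : nat) (F : 'rV[R]_k -> \bar R) : \bar R :=
  ereal_inf [set int_Rn h | h in
    [set h : 'rV[R]_k -> \bar R |
      borel_fun h /\ (forall x, 0 <= h x)%E /\ (forall x, F x <= h x)%E]].

Definition centered_gaussian (R : realType) (k : nat) (g : 'rV[R]_k -> R) : Prop :=
  exists A : 'M[R]_k,
    A^T = A /\ (forall x : 'rV[R]_k, x != 0 -> 0 < dotv (x *m A) x) /\
    (forall x, g x = expR (- dotv (x *m A) x)).

Definition I_fun (R : realType) (n m : nat) (nn : 'I_m -> nat) (c : 'I_m -> R)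
  (B : forall i, 'M[R]_(n, nn i)) (f : forall i, 'rV[R]_(nn i) -> R) : \bar R :=
  outer_int (fun x : 'rV[R]_n =>
    ereal_sup [set ((\prod_(i < m) powR (f i (y i)) (c i))%:E) | y in
      [set y : (forall i, 'rV[R]_(nn i)) |
         \sum_(i < m) c i *: (y i *m (B i)^T) = x]]).

Definition J_fun (R : realType) (n m : nat) (nn : 'I_m -> nat) (c : 'I_m -> R)
  (B : forall i, 'M[R]_(n, nn i)) (f : forall i, 'rV[R]_(nn i) -> R) : \bar R :=
  int_Rn (fun x : 'rV[R]_n => (\prod_(i < m) powR (f i (x *m B i)) (c i))%:E).

(* prod_i (int g_i)^{c_i}  (the integrals of Gaussians are finite and > 0). *)
Definition prod_int (R : realType) (m : nat) (nn : 'I_m -> nat) (c : 'I_m -> R)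
  (f : forall i, 'rV[R]_(nn i) -> R) : R :=
  \prod_(i < m) powR (fine (int_Rn (fun y => (f i y)%:E))) (c i).

Definition gaussian_tuple (R : realType) (m : nat) (nn : 'I_m -> nat)
  (f : forall i, 'rV[R]_(nn i) -> R) : Prop :=
  forall i, centered_gaussian (f i).

Definition E_g (R : realType) (n m : nat) (nn : 'I_m -> nat) (c : 'I_m -> R)
  (B : forall i, 'M[R]_(n, nn i)) : \bar R :=
  ereal_inf [set (I_fun c B f * ((prod_int c f)^-1)%:E)%E | f in
     [set f | gaussian_tuple f]].

Definition F_g (R : realType) (n m : nat) (nn : 'I_m -> nat) (c : 'I_m -> R)
  (B : forall i, 'M[R]_(n, nn i)) : \bar R :=
  ereal_sup [set (J_fun c B f * ((prod_int c f)^-1)%:E)%E | f in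
     [set f | gaussian_tuple f]].

(* For a Gaussian tuple g_A (each A_i symmetric positive definite) both functionals
   are Gaussian integrals over R^n.  J(g_A) is the mass of exp(-<M(A)x,x>) with
   M(A) = sum_i c_i B_i A_i B_i^*; the supremum inside I(g_A) is a quadratic
   minimisation solved by Lagrange multipliers, giving exp(-<M(A^-1)^-1 x,x>).
   The mass of exp(-<Qx,x>) on R^k is (pi^k / det Q)^(1/2), so the masses at Q and
   at Q^-1 multiply to pi^k; together with sum_i c_i n_i = n this makes the I-ratio
   at A the reciprocal of the J-ratio at A^-1.  Since A |-> A^-1 permutes Gaussian
   tuples, E_g is the infimum of the reciprocals of the numbers whose supremum is F_g. *)

From HB Require Import structures.
From mathcomp Require Import all_boot all_order all_algebra.
From mathcomp Require Import all_classical all_reals all_analysis.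
From mathcomp Require Import ring lra.
Set Implicit Arguments. Unset Strict Implicit. Unset Printing Implicit Defensive.
Import Order.TTheory GRing.Theory Num.Theory.
Local Open Scope classical_set_scope.
Local Open Scope ring_scope.

Section QuadraticForms.
Variable R : realType.

Lemma dotvC k (u v : 'rV[R]_k) : dotv u v = dotv v u.
Proof. by rewrite /dotv -[in LHS](trmxK u) -trmx_mul mxE. Qed.

Lemma dotv_mulmxl k l (u : 'rV[R]_k) (A : 'M[R]_(k, l)) v :
  dotv (u *m A) v = dotv u (v *m A^T).
Proof. by rewrite /dotv trmx_mul trmxK mulmxA. Qed.

Lemma dotvDl k (u u' v : 'rV[R]_k) : dotv (u + u') v = dotv u v + dotv u' v.
Proof. by rewrite /dotv mulmxDl mxE. Qed.

Lemma dotvZl k a (u v : 'rV[R]_k) : dotv (a *: u) v = a * dotv u v.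
Proof. by rewrite /dotv -scalemxAl mxE. Qed.

Lemma dotvNl k (u v : 'rV[R]_k) : dotv (- u) v = - dotv u v.
Proof. by rewrite -scaleN1r dotvZl mulN1r. Qed.

Lemma dotv0l k (v : 'rV[R]_k) : dotv 0 v = 0.
Proof. by rewrite /dotv mul0mx mxE. Qed.

Lemma dotvDr k (u v v' : 'rV[R]_k) : dotv u (v + v') = dotv u v + dotv u v'.
Proof. by rewrite dotvC dotvDl !(dotvC _ u). Qed.

Lemma dotvZr k a (u v : 'rV[R]_k) : dotv u (a *: v) = a * dotv u v.
Proof. by rewrite dotvC dotvZl dotvC. Qed.

Lemma dotvNr k (u v : 'rV[R]_k) : dotv u (- v) = - dotv u v.
Proof. by rewrite dotvC dotvNl dotvC. Qed.

Lemma dotv_sumr k (I : finType) (a : I -> R) (u : 'rV[R]_k) (w : I -> 'rV[R]_k) :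
  dotv u (\sum_i a i *: w i) = \sum_i a i * dotv u (w i).
Proof.
rewrite /dotv raddf_sum /= mulmx_sumr summxE; apply: eq_bigr => i _.
by rewrite linearZ /= -scalemxAr mxE.
Qed.

Lemma dotv_row_mx k l (u1 v1 : 'rV[R]_k) (u2 v2 : 'rV[R]_l) :
  dotv (row_mx u1 u2) (row_mx v1 v2) = dotv u1 v1 + dotv u2 v2.
Proof. by rewrite /dotv tr_row_mx mul_row_col mxE. Qed.

Lemma dotv_scalar_mxr (u : 'rV[R]_1) t : dotv u t%:M = t * u 0 0.
Proof. by rewrite /dotv tr_scalar_mx mul_mx_scalar mxE mulrC. Qed.

Lemma dotv_block_mx k (a : 'M[R]_1) (w : 'M[R]_(1, k)) (P : 'M[R]_k) t y :
  dotv (row_mx t%:M y *m block_mx a w w^T P) (row_mx t%:M y)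
  = a 0 0 * t ^+ 2 + 2 * t * dotv y w + dotv (y *m P) y.
Proof.
rewrite mul_row_block dotv_row_mx dotv_scalar_mxr dotvDl !mul_scalar_mx dotvZl.
have -> : (t *: a + y *m w^T) 0 0 = t * a 0 0 + dotv y w.
  by rewrite /dotv [LHS]mxE [(t *: a) 0 0]mxE.
rewrite (dotvC w y); ring.
Qed.

Definition posdef k (A : 'M[R]_k) := forall x : 'rV[R]_k, x != 0 -> 0 < dotv (x *m A) x.

Lemma posdef_ge0 k (A : 'M[R]_k) x : posdef A -> 0 <= dotv (x *m A) x.
Proof.
move=> Apd; have [->|x0] := eqVneq x 0; first by rewrite mul0mx dotv0l.
exact/ltW/Apd.
Qed.

Lemma posdef_unitmx k (A : 'M[R]_k) : posdef A -> A \in unitmx.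
Proof.
move=> Apd; rewrite unitmxE unitfE; apply/negP => /det0P [v v0 vA].
by have := Apd v v0; rewrite vA dotv0l ltxx.
Qed.

Lemma posdef_invmx k (A : 'M[R]_k) : A^T = A -> posdef A ->
  (invmx A)^T = invmx A /\ posdef (invmx A).
Proof.
move=> As Apd; have Au := posdef_unitmx Apd; split; first by rewrite trmx_inv As.
move=> x x0; set y := x *m invmx A.
have xE : x = y *m A by rewrite /y mulmxKV.
have y0 : y != 0 by apply: contraNneq x0 => y0; rewrite xE y0 mul0mx.
by rewrite xE dotvC; exact: Apd.
Qed.

Lemma posdef1 k : posdef (1%:M : 'M[R]_k).
Proof.
move=> x x0; rewrite mulmx1 /dotv mxE.
have [j xj] : exists j, x 0 j != 0.
  apply: contrapT => x_eq0; move/negP: x0; apply; apply/eqP/rowP => j.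
  by rewrite mxE; apply/eqP/negPn/negP => xj; apply: x_eq0; exists j.
rewrite (bigD1 j) //= ltr_wpDr ?sumr_ge0 // => [i _|].
  by rewrite mxE -expr2 sqr_ge0.
by rewrite mxE -expr2 exprn_even_gt0.
Qed.

End QuadraticForms.

Section SchurComplement.
Variables (R : realType) (k : nat) (Q : 'M[R]_(1 + k)).
Hypotheses (Qs : Q^T = Q) (Qpd : posdef Q).

Let a := ulsubmx Q.
Let w := ursubmx Q.
Let P := drsubmx Q.
Let v := w *m invmx P.
Definition schur_compl := a 0 0 - dotv v w.
Let S := schur_compl.

Lemma schur_blockE : Q = block_mx a w w^T P.
Proof. by rewrite -[LHS]submxK /w trmx_ursub Qs. Qed.

Lemma schur_sym : P^T = P.
Proof. by rewrite /P trmx_drsub Qs. Qed.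

Lemma schur_posdef : posdef P.
Proof.
move=> y y0; have := Qpd (x := row_mx 0%:M y).
rewrite schur_blockE dotv_block_mx expr2 !(mulr0, mul0r, add0r); apply.
by rewrite row_mx_eq0 negb_and y0 orbT.
Qed.

Let P_unitmx : P \in unitmx. Proof. exact: posdef_unitmx schur_posdef. Qed.
Let vP : v *m P = w. Proof. by rewrite /v -mulmxA mulVmx ?mulmx1. Qed.

Lemma schur_quad t (y : 'rV[R]_k) :
  dotv (row_mx t%:M y *m Q) (row_mx t%:M y) =
  dotv ((y + t *: v) *m P) (y + t *: v) + S * t ^+ 2.
Proof.
rewrite {1}schur_blockE dotv_block_mx mulmxDl !dotvDl !dotvDr -!scalemxAl.
have yPv : dotv (y *m P) v = dotv y w by rewrite dotv_mulmxl schur_sym -vP.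
rewrite !dotvZl !dotvZr yPv vP /S /schur_compl (dotvC w y) (dotvC w v); ring.
Qed.

Lemma schur_compl_gt0 : 0 < S.
Proof.
have := Qpd (x := row_mx 1%:M (- v)).
rewrite schur_quad scale1r addNr mul0mx dotv0l add0r expr1n mulr1; apply.
by rewrite row_mx_eq0 negb_and matrix_nonzero1.
Qed.

Lemma det_schur : \det Q = S * \det P.
Proof.
have -> : Q = block_mx 1%:M v 0 1%:M *m block_mx S%:M 0 0 P *m
    block_mx 1%:M 0 (invmx P *m w^T) 1%:M.
  rewrite !mulmx_block !(mul0mx, mulmx0, mul1mx, mulmx1, addr0, add0r).
  rewrite {1}schur_blockE vP; congr block_mx; last by rewrite mulmxA mulmxV // mul1mx.
  rewrite mulmxA -/v [v *m w^T]mx11_scalar -raddfD /= /S /schur_compl /dotv.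
  by rewrite subrK -mx11_scalar.
rewrite !det_mulmx (det_ublock 1%:M) (det_ublock S%:M) (det_lblock 1%:M).
by rewrite !det1 det_scalar1 !mul1r mulr1.
Qed.

End SchurComplement.

Lemma posdef_det_gt0 (R : realType) k (Q : 'M[R]_k) : Q^T = Q -> posdef Q -> 0 < \det Q.
Proof.
elim: k Q => [|k IH] Q Qs Qpd; first by rewrite det_mx00.
rewrite (det_schur Qs Qpd) mulr_gt0 ?schur_compl_gt0 //.
exact: IH (schur_sym Qs) (schur_posdef Qs Qpd).
Qed.

Section GaussianIntegral.
Variable R : realType.

Lemma integral_gauss1 (c S u : R) : 0 <= c -> 0 < S ->
  (\int[@lebesgue_measure R]_t (c * expR (- (S * (t - u) ^+ 2)))%:E)%E
  = (c * Num.sqrt (pi / S))%:E.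
Proof.
move=> c0 S0.
set sg := Num.sqrt ((S *+ 2)^-1).
have sg2 : sg ^+ 2 = (S *+ 2)^-1.
  by rewrite sqr_sqrtr // invr_ge0 mulrn_wge0 // ltW.
have sg0 : sg != 0 by rewrite /sg sqrtr_eq0 -ltNge invr_gt0 mulrn_wgt0.
have pdfE t : c * expR (- (S * (t - u) ^+ 2)) =
    (c * Num.sqrt (pi / S)) * normal_pdf u sg t.
  rewrite /normal_pdf (negbTE sg0) /normal_fun /normal_peak sg2.
  have -> : (S *+ 2)^-1 *+ 2 = S^-1.
    by rewrite -mulr_natr -[S *+ 2]mulr_natr; field; exact: lt0r_neq0.
  rewrite -mulrA; congr (_ * _); rewrite mulrA.
  have -> : (S *+ 2)^-1 * pi *+ 2 = pi / S.
    by rewrite -mulr_natr -[S *+ 2]mulr_natr; field; exact: lt0r_neq0.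
  rewrite mulrA mulfV ?mul1r; last by rewrite sqrtr_eq0 -ltNge divr_gt0 // pi_gt0.
  by rewrite invrK; congr expR; ring.
under eq_integral do rewrite pdfE EFinM.
rewrite ge0_integralZl_EFin ?integral_normal_pdf ?mule1 //.
- by move=> x _; rewrite lee_fin normal_pdf_ge0.
- by apply/measurable_realfun.measurable_EFinP; exact: measurable_normal_pdf.
- by rewrite mulr_ge0 // sqrtr_ge0.
Qed.

Definition row_of_seq k (s : seq R) : 'rV[R]_k := \row_(i < k) nth 0 s i.

Lemma row_of_seq_cons_sub k t s (u : 'rV[R]_(1 + k)) :
  row_of_seq k.+1 (t :: s) - u =
  row_mx (t - u 0 0)%:M (row_of_seq k s - rsubmx u).
Proof.
apply/rowP => j; rewrite !mxE; case: splitP => j' /= Hj.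
  rewrite !mxE Hj ord1 /= mulr1n.
  by congr (t - u 0 _); apply: val_inj; rewrite /= Hj [j']ord1.
rewrite Hj /= [RHS]mxE [row_of_seq k s 0 j']mxE [X in _ = _ + X]mxE mxE /=.
by congr (_ - u 0 _); apply: val_inj.
Qed.

Lemma iter_int_ge0 k (f : seq R -> \bar R) :
  (forall s, 0 <= f s)%E -> (0 <= iter_int k f)%E.
Proof.
elim: k f => [|k IH] f f0 //=.
by apply: integral_ge0 => t _; apply: IH.
Qed.

Lemma le_iter_int k (f g : seq R -> \bar R) : (forall s, 0 <= f s)%E ->
  (forall s, f s <= g s)%E -> (iter_int k f <= iter_int k g)%E.
Proof.
elim: k f g => [|k IH] f g f0 fg //=.
have g0 s : (0 <= g s)%E by apply: le_trans (fg s).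
rewrite !ge0_integralTE; [|by move=> t; exact: iter_int_ge0..].
apply: ereal_sup_le => _ [h hf <-]; exists h => // t.
by apply: le_trans (hf t) _; apply: IH.
Qed.

(* Completing the square with the Schur complement splits the exponent into a
   Gaussian in the first coordinate and a shifted Gaussian in the others. *)
Lemma iter_int_gauss k (Q : 'M[R]_k) (u : 'rV[R]_k) (c : R) :
  Q^T = Q -> posdef Q -> 0 <= c ->
  iter_int k (fun s => (c * expR (- dotv ((row_of_seq k s - u) *m Q)
                                         (row_of_seq k s - u)))%:E)
  = (c * Num.sqrt (pi ^+ k / \det Q))%:E.
Proof.
elim: k Q u c => [|k IH] Q u c Qs Qpd c0.
  rewrite /= det_mx00 expr0 divr1 sqrtr1 mulr1.
  by rewrite /dotv mxE big_ord0 oppr0 expR0 mulr1.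
set P := drsubmx (Q : 'M[R]_(1 + k)).
set v := ursubmx (Q : 'M[R]_(1 + k)) *m invmx P.
set S := schur_compl Q.
have S0 : 0 < S := schur_compl_gt0 Qs Qpd.
have Ps : P^T = P := schur_sym Qs.
have Ppd : posdef P := schur_posdef Qs Qpd.
have inner t : iter_int k (fun s =>
    (c * expR (- dotv ((row_of_seq k.+1 (t :: s) - u) *m Q)
                      (row_of_seq k.+1 (t :: s) - u)))%:E)
  = ((c * Num.sqrt (pi ^+ k / \det P)) * expR (- (S * (t - u 0 0) ^+ 2)))%:E.
  set u' := rsubmx (u : 'rV[R]_(1 + k)) - (t - u 0 0) *: v.
  rewrite (_ : (fun s => _) = fun s => ((c * expR (- (S * (t - u 0 0) ^+ 2))) *
      expR (- dotv ((row_of_seq k s - u') *m P) (row_of_seq k s - u')))%:E).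
    by rewrite IH ?mulr_ge0 ?expR_ge0 // mulrAC.
  apply/funext => s; rewrite row_of_seq_cons_sub schur_quad //.
  have -> : row_of_seq k s - u' =
      row_of_seq k s - rsubmx (u : 'rV[R]_(1 + k)) + (t - u 0 0) *: v.
    by rewrite /u' opprD opprK addrA.
  by rewrite opprD expRD; congr EFin; ring.
rewrite /=; under eq_integral => t _ do rewrite inner.
rewrite integral_gauss1 ?mulr_ge0 ?sqrtr_ge0 //; congr EFin.
rewrite (det_schur Qs Qpd) -/S -/P -mulrA -sqrtrM; last first.
  by rewrite divr_ge0 ?exprn_ge0 ?pi_ge0 // ltW // posdef_det_gt0.
congr (c * Num.sqrt _); rewrite exprS; field.
by rewrite !lt0r_neq0 // posdef_det_gt0.
Qed.

Lemma int_Rn_gauss k (Q : 'M[R]_k) : Q^T = Q -> posdef Q ->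
  int_Rn (fun x => (expR (- dotv (x *m Q) x))%:E) = (Num.sqrt (pi ^+ k / \det Q))%:E.
Proof.
move=> Qs Qpd; have := iter_int_gauss 0 Qs Qpd ler01.
by rewrite mul1r => <-; under [in RHS]eq_fun do rewrite subr0 mul1r.
Qed.

End GaussianIntegral.

Section OuterIntegral.
Variable R : realType.

Lemma le_int_Rn k (f g : 'rV[R]_k -> \bar R) : (forall x, 0 <= f x)%E ->
  (forall x, f x <= g x)%E -> (int_Rn f <= int_Rn g)%E.
Proof. by move=> f0 fg; apply: le_iter_int. Qed.

Lemma outer_int_borel k (F : 'rV[R]_k -> \bar R) :
  borel_fun F -> (forall x, 0 <= F x)%E -> outer_int F = int_Rn F.
Proof.
move=> Fb F0; apply/eqP; rewrite eq_le; apply/andP; split.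
  by apply: ereal_inf_lbound; exists F.
by apply/ereal_infP => _ [h [_ [_ Fh]] <-]; apply: le_int_Rn.
Qed.

Lemma continuous_borel_fun k (g : 'rV[R]_k -> R) :
  continuous (g : 'rV[R^o]_k -> R^o) -> borel_fun (fun x => (g x)%:E).
Proof.
move=> gc t; apply: sub_sigma_algebra.
rewrite (_ : [set x | _] = g @^-1` [set y : R^o | t < y]).
  exact: (continuousP _).1 gc _ (@open_gt R t).
by apply/seteqP; split => x /=; rewrite lte_fin.
Qed.

Lemma continuous_quad k (Q : 'M[R]_k) :
  continuous (fun x : 'rV[R^o]_k => (dotv (x *m Q) x : R^o)).
Proof.
have qE : (fun x : 'rV[R^o]_k => (dotv (x *m Q) x : R^o)) =
    (fun x => \sum_(j < k) (\sum_(i < k) x 0 i * Q i j) * x 0 j).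
  by apply/funext => x; rewrite /dotv mxE; apply: eq_bigr => j _; rewrite !mxE.
have sum_continuous := @continuous_big R^o 'I_k +%R 0 xpredT add_continuous.
rewrite qE; apply: (sum_continuous) => j _ x.
apply: continuousM; last exact: coord_continuous.
apply: (sum_continuous) => i _ y; apply: continuousM.
  exact: (@coord_continuous R^o 1 k 0 i).
exact: (@cst_continuous _ R^o (Q i j) y).
Qed.

Lemma continuous_gauss k (Q : 'M[R]_k) :
  continuous (fun x : 'rV[R^o]_k => (expR (- dotv (x *m Q) x) : R^o)).
Proof.
rewrite (_ : (fun x => _) = fun x => (expR (dotv (x *m - Q) x) : R^o)).
  by move=> x; apply: (cvg_comp _ expR); [exact: continuous_quad|exact: continuous_expR].
by apply/funext => x; rewrite mulmxN dotvNl.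
Qed.

Lemma outer_int_gauss k (Q : 'M[R]_k) :
  outer_int (fun x => (expR (- dotv (x *m Q) x))%:E) =
  int_Rn (fun x => (expR (- dotv (x *m Q) x))%:E).
Proof.
apply: outer_int_borel => [|x]; last by rewrite lee_fin expR_ge0.
apply: (continuous_borel_fun (g := fun x => expR (- dotv (x *m Q) x))).
exact: continuous_gauss.
Qed.

End OuterIntegral.

Section InfimalConvolution.
Variables (R : realType) (n m : nat) (nn : 'I_m -> nat) (c : 'I_m -> R).
Variable B : forall i : 'I_m, 'M[R]_(n, nn i).
Hypothesis c_gt0 : forall i, 0 < c i.
Hypothesis B_inj : forall x : 'rV[R]_n, (forall i, x *m B i = 0) -> x = 0.

Definition pullback_sum (A : forall i, 'M[R]_(nn i)) : 'M[R]_n :=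
  \sum_i c i *: (B i *m A i *m (B i)^T).

Lemma dotv_pullback_sum A x :
  dotv (x *m pullback_sum A) x = \sum_i c i * dotv (x *m B i *m A i) (x *m B i).
Proof.
rewrite /pullback_sum /dotv mulmx_sumr mulmx_suml summxE; apply: eq_bigr => i _.
by rewrite -scalemxAr -scalemxAl mxE trmx_mul !mulmxA.
Qed.

Lemma pullback_sum_sym A :
  (forall i, (A i)^T = A i) -> (pullback_sum A)^T = pullback_sum A.
Proof.
move=> As; rewrite /pullback_sum raddf_sum /=; apply: eq_bigr => i _.
by rewrite linearZ /= !trmx_mul trmxK As mulmxA.
Qed.

Lemma pullback_sum_posdef A : (forall i, posdef (A i)) -> posdef (pullback_sum A).
Proof.
move=> Apd x x0; rewrite dotv_pullback_sum.
have [i xBi] : exists i, x *m B i != 0.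
  apply: contrapT => xB0; move/negP: x0; apply; apply/eqP/B_inj => i.
  by apply/eqP; apply/negPn/negP => xBi; apply: xB0; exists i.
rewrite (bigD1 i) //= ltr_wpDr ?mulr_gt0 ?Apd // sumr_ge0 // => j _.
by rewrite mulr_ge0 ?posdef_ge0 // ltW.
Qed.

Variable A : forall i, 'M[R]_(nn i).
Hypothesis A_sym : forall i, (A i)^T = A i.
Hypothesis A_posdef : forall i, posdef (A i).

Let N := pullback_sum (fun i => invmx (A i)).

Let N_unitmx : N \in unitmx.
Proof.
apply/posdef_unitmx/pullback_sum_posdef => i.
by case: (posdef_invmx (A_sym i) (@A_posdef i)).
Qed.

(* The minimiser of sum_i c_i <A_i y_i, y_i> subject to sum_i c_i B_i^* y_i = x,
   found by Lagrange multipliers. *)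
Definition infconv_argmin (x : 'rV[R]_n) i : 'rV[R]_(nn i) :=
  x *m invmx N *m B i *m invmx (A i).

Lemma sum_infconv_argmin x : \sum_i c i *: (infconv_argmin x i *m (B i)^T) = x.
Proof.
rewrite -[in RHS](mulmxKV N_unitmx x) /N /pullback_sum mulmx_sumr.
by apply: eq_bigr => i _; rewrite -scalemxAr !mulmxA.
Qed.

Lemma dotv_infconv_argmin x (y : forall i, 'rV[R]_(nn i)) :
  \sum_i c i * dotv (y i *m A i) (infconv_argmin x i) =
  dotv (x *m invmx N) (\sum_i c i *: (y i *m (B i)^T)).
Proof.
rewrite dotv_sumr; apply: eq_bigr => i _; congr (_ * _).
have Au := posdef_unitmx (@A_posdef i).
by rewrite dotv_mulmxl A_sym /infconv_argmin mulmxKV // dotvC dotv_mulmxl.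
Qed.

Lemma infconv_min x :
  \sum_i c i * dotv (infconv_argmin x i *m A i) (infconv_argmin x i) =
  dotv (x *m invmx N) x.
Proof. by rewrite dotv_infconv_argmin sum_infconv_argmin. Qed.

(* Expand 0 <= <A_i (y_i - ys_i), y_i - ys_i> and sum over i: by the constraint,
   the cross terms add up to twice the minimum. *)
Lemma infconv_min_le x (y : forall i, 'rV[R]_(nn i)) :
  \sum_i c i *: (y i *m (B i)^T) = x ->
  dotv (x *m invmx N) x <= \sum_i c i * dotv (y i *m A i) (y i).
Proof.
move=> yx; set ys := infconv_argmin x.
have cross i : 2 * dotv (y i *m A i) (ys i) - dotv (ys i *m A i) (ys i)
    <= dotv (y i *m A i) (y i).
  have := posdef_ge0 (y i - ys i) (@A_posdef i).
  rewrite mulmxBl !dotvDl !dotvDr !dotvNl !dotvNr.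
  have -> : dotv (ys i *m A i) (y i) = dotv (y i *m A i) (ys i).
    by rewrite dotv_mulmxl A_sym dotvC.
  lra.
apply: le_trans (ler_sum _ (fun i _ => ler_wpM2l (ltW (c_gt0 i)) (cross i))).
rewrite (_ : \sum_i _ = 2 * (\sum_i c i * dotv (y i *m A i) (ys i)) -
    \sum_i c i * dotv (ys i *m A i) (ys i)).
  by rewrite dotv_infconv_argmin yx infconv_min; lra.
by rewrite mulr_sumr -sumrB; apply: eq_bigr => i _; ring.
Qed.

End InfimalConvolution.

Section InfOfInverses.
Variables (R : realType) (T : set R).
Hypothesis T_gt0 : forall r, T r -> 0 < r.

Let E := ereal_inf (EFin @` (GRing.inv @` T)).
Let F := ereal_sup (EFin @` T).

Lemma ereal_inf_inv_ge0 : (0 <= E)%E.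
Proof.
by apply/ereal_infP => _ [_ [r Tr <-] <-]; rewrite lee_fin invr_ge0 ltW ?T_gt0.
Qed.

Lemma ereal_inf_inv_lt (a : R) : 0 < a -> (a%:E < F)%E -> (E < a^-1%:E)%E.
Proof.
move=> a0 /ereal_sup_gtP [_ [r Tr <-]]; rewrite lte_fin => ar.
have Er : (E <= r^-1%:E)%E by apply: ereal_inf_lbound; exists r^-1 => //; exists r.
apply: le_lt_trans Er _; rewrite lte_fin ltf_pV2 ?posrE //; exact: T_gt0.
Qed.

Lemma ereal_inf_inv_sup : T !=set0 ->
  ((F < +oo)%E -> (E * F)%E = 1%E) /\ (E = 0%E <-> F = +oo%E).
Proof.
move=> [r0 Tr0].
have r0_gt0 := T_gt0 Tr0.
have r0F : (r0%:E <= F)%E by apply: ereal_sup_ubound; exists r0.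
have [e Ee] : exists e : R, E = e%:E.
  exists (fine E); rewrite fineK // ge0_fin_numE ?ereal_inf_inv_ge0 //.
  have Er0 : (E <= r0^-1%:E)%E by apply: ereal_inf_lbound; exists r0^-1 => //; exists r0.
  exact: le_lt_trans Er0 (ltry _).
have e_ge0 : 0 <= e by rewrite -lee_fin -Ee ereal_inf_inv_ge0.
have F_le e' : 0 < e' -> E = e'%:E -> (F <= e'^-1%:E)%E.
  move=> e'0 Ee'; rewrite leNgt; apply/negP.
  by move=> /ereal_inf_inv_lt; rewrite invr_gt0 invrK Ee' ltxx => /(_ e'0).
case EF: F F_le r0F => [s| |] F_le r0F; last by rewrite leeNy_eq in r0F.
- have s_gt0 : 0 < s by rewrite -lte_fin (lt_le_trans _ r0F) ?lte_fin.
  have se : s^-1 <= e.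
    rewrite -lee_fin -Ee; apply/ereal_infP => _ [_ [r Tr <-] <-].
    have rs : r <= s by rewrite -lee_fin -EF; apply: ereal_sup_ubound; exists r.
    by rewrite lee_fin lef_pV2 ?posrE //; exact: T_gt0.
  have e_gt0 : 0 < e by apply: lt_le_trans se; rewrite invr_gt0.
  have es : e <= s^-1 by rewrite -(invrK e) lef_pV2 ?posrE ?invr_gt0 // -lee_fin F_le.
  have -> : E = s^-1%:E by rewrite Ee; congr EFin; apply/le_anti; rewrite se es.
  rewrite -EFinM mulVf ?gt_eqF //; split => //; split => [/eqP|[]] //.
  by rewrite eqe invr_eq0 gt_eqF.
- have -> : E = 0%E.
    rewrite Ee; congr EFin; apply/le_anti; rewrite e_ge0 andbT leNgt.
    by apply/negP => e_gt0; have := F_le e e_gt0 Ee; rewrite leye_eq.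
  by split => // /[!ltxx].
Qed.

End InfOfInverses.

Section GaussianMass.
Variable R : realType.

Definition gauss_mass k (Q : 'M[R]_k) := Num.sqrt (pi ^+ k / \det Q).

Lemma gauss_mass_gt0 k (Q : 'M[R]_k) : Q^T = Q -> posdef Q -> 0 < gauss_mass Q.
Proof.
move=> Qs Qpd; rewrite sqrtr_gt0 divr_gt0 ?exprn_gt0 ?pi_gt0 //.
exact: posdef_det_gt0.
Qed.

Lemma gauss_mass_invmx k (Q : 'M[R]_k) : Q^T = Q -> posdef Q ->
  gauss_mass Q * gauss_mass (invmx Q) = pi ^+ k.
Proof.
move=> Qs Qpd; have dQ := posdef_det_gt0 Qs Qpd.
rewrite /gauss_mass det_inv -sqrtrM ?divr_ge0 ?exprn_ge0 ?pi_ge0 ?ltW // invrK.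
have -> : pi ^+ k / \det Q * (pi ^+ k * \det Q) = (pi ^+ k) ^+ 2.
  by rewrite expr2; field; exact: lt0r_neq0.
by rewrite sqrtr_sqr ger0_norm // exprn_ge0 // pi_ge0.
Qed.

End GaussianMass.

Section GaussianFamilies.
Variables (R : realType) (n m : nat) (nn : 'I_m -> nat) (c : 'I_m -> R).
Variable B : forall i : 'I_m, 'M[R]_(n, nn i).
Hypothesis c_gt0 : forall i, 0 < c i.
Hypothesis B_inj : forall x : 'rV[R]_n, (forall i, x *m B i = 0) -> x = 0.

Definition spd_family (A : forall i, 'M[R]_(nn i)) :=
  forall i, (A i)^T = A i /\ posdef (A i).

Definition gauss_family (A : forall i, 'M[R]_(nn i)) i (y : 'rV[R]_(nn i)) : R :=
  expR (- dotv (y *m A i) y).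

Definition inv_family (A : forall i, 'M[R]_(nn i)) i := invmx (A i).

Definition gauss_mass_prod (A : forall i, 'M[R]_(nn i)) :=
  \prod_i powR (gauss_mass (A i)) (c i).

Definition J_ratio A := gauss_mass (pullback_sum c B A) / gauss_mass_prod A.

Lemma spd_inv_family A : spd_family A -> spd_family (inv_family A).
Proof. by move=> As i; case: (As i) => ? ?; exact: posdef_invmx. Qed.

Lemma inv_familyK : involutive inv_family.
Proof.
by move=> A; apply: functional_extensionality_dep => i; rewrite /inv_family invmxK.
Qed.

Lemma image_inv_family : inv_family @` spd_family = spd_family.
Proof.
apply/seteqP; split => [_ [A As <-]|A As]; first exact: spd_inv_family.
by exists (inv_family A); [exact: spd_inv_family | exact: inv_familyK].
Qed.

Lemma gaussian_tuple_gauss_family A : spd_family A -> gaussian_tuple (gauss_family A).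
Proof. by move=> As i; exists (A i); case: (As i). Qed.

Lemma gaussian_tupleP (f : forall i, 'rV[R]_(nn i) -> R) :
  gaussian_tuple f -> exists2 A, spd_family A & f = gauss_family A.
Proof.
move=> fg; pose A i := projT1 (cid (fg i)).
exists A => [i|]; first by have [As [Apd _]] := projT2 (cid (fg i)).
apply: functional_extensionality_dep => i; apply/funext => y.
by have [_ [_ ->]] := projT2 (cid (fg i)).
Qed.

Lemma image_gaussian_tuple (T : Type) (h : (forall i, 'rV[R]_(nn i) -> R) -> T) :
  [set h f | f in [set f | gaussian_tuple f]] =
  [set h (gauss_family A) | A in spd_family].
Proof.
apply/seteqP; split => [_ [f /gaussian_tupleP [A As ->] <-]|_ [A As <-]].
  by exists A.
by exists (gauss_family A) => //; exact: gaussian_tuple_gauss_family.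
Qed.

Lemma gauss_mass_prod_gt0 A : spd_family A -> 0 < gauss_mass_prod A.
Proof.
move=> As; apply: prodr_gt0 => i _; case: (As i) => ? ?.
by rewrite powR_gt0 // gauss_mass_gt0.
Qed.

Lemma prod_powR_expR (q : 'I_m -> R) :
  \prod_i powR (expR (- q i)) (c i) = expR (- \sum_i c i * q i).
Proof.
rewrite -sumrN expR_sum; apply: eq_bigr => i _; rewrite -expRM; congr expR; ring.
Qed.

Lemma prod_int_gauss A : spd_family A -> prod_int c (gauss_family A) = gauss_mass_prod A.
Proof.
move=> As; apply: eq_bigr => i _; case: (As i) => ? ?.
by rewrite /gauss_family int_Rn_gauss.
Qed.

Lemma J_fun_gauss A : spd_family A ->
  J_fun c B (gauss_family A) = (gauss_mass (pullback_sum c B A))%:E.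
Proof.
move=> As; rewrite /J_fun /gauss_family.
under eq_fun do rewrite prod_powR_expR -dotv_pullback_sum.
apply: int_Rn_gauss; first by apply: pullback_sum_sym => i; case: (As i).
by apply: pullback_sum_posdef => // i; case: (As i).
Qed.

Lemma I_fun_gauss A : spd_family A ->
  I_fun c B (gauss_family A) =
  (gauss_mass (invmx (pullback_sum c B (inv_family A))))%:E.
Proof.
move=> As.
have A_sym i : (A i)^T = A i by case: (As i).
have A_posdef i : posdef (A i) by case: (As i).
set M := pullback_sum c B (inv_family A).
have [Ns Npd] : (invmx M)^T = invmx M /\ posdef (invmx M).
  apply: posdef_invmx; first by apply: pullback_sum_sym => i; case: (spd_inv_family As i).
  by apply: pullback_sum_posdef => // i; case: (spd_inv_family As i).
rewrite /I_fun (_ : (fun x => ereal_sup _) =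
    fun x => (expR (- dotv (x *m invmx M) x))%:E).
  by rewrite outer_int_gauss int_Rn_gauss.
apply/funext => x; apply/eqP; rewrite eq_le; apply/andP; split.
  apply: ge_ereal_sup => _ [y yx <-].
  rewrite lee_fin /gauss_family prod_powR_expR ler_expR lerN2.
  by apply: (infconv_min_le c_gt0 B_inj A_sym A_posdef); exact: yx.
apply: ereal_sup_ubound; exists (infconv_argmin c B A x).
  exact: (sum_infconv_argmin c_gt0 B_inj A_sym A_posdef).
by rewrite /gauss_family prod_powR_expR (infconv_min c_gt0 B_inj A_sym A_posdef).
Qed.

End GaussianFamilies.

Section Duality.
Variables (R : realType) (n m : nat) (nn : 'I_m -> nat) (c : 'I_m -> R).
Variable B : forall i : 'I_m, 'M[R]_(n, nn i).
Hypothesis c_gt0 : forall i, 0 < c i.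
Hypothesis B_inj : forall x : 'rV[R]_n, (forall i, x *m B i = 0) -> x = 0.
Hypothesis scaling : \sum_(i < m) c i * (nn i)%:R = n%:R.

Lemma prod_powR_exprn (x : R) : 0 < x -> \prod_i powR (x ^+ nn i) (c i) = x ^+ n.
Proof.
move=> x0; rewrite -[in RHS](lnK x0) -expRM_natl -scaling mulr_suml expR_sum.
apply: eq_bigr => i _; rewrite /powR gt_eqF ?exprn_gt0 // lnXn //.
by congr expR; rewrite -mulr_natr; ring.
Qed.

Let fam := forall i, 'M[R]_(nn i).

Lemma gauss_mass_prod_inv_family (A : fam) : spd_family A ->
  gauss_mass_prod c A * gauss_mass_prod c (inv_family A) = pi ^+ n.
Proof.
move=> As; rewrite -big_split /= -(prod_powR_exprn (pi_gt0 R)).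
apply: eq_bigr => i _; have [Ais Aipd] := As i.
have [Ais' Aipd'] := spd_inv_family As i.
by rewrite -powRM ?ltW ?gauss_mass_gt0 // gauss_mass_invmx.
Qed.

Lemma J_ratio_gt0 (A : fam) : spd_family A -> 0 < J_ratio c B A.
Proof.
move=> As; rewrite divr_gt0 ?gauss_mass_prod_gt0 //.
apply: gauss_mass_gt0; first by apply: pullback_sum_sym => i; case: (As i).
by apply: pullback_sum_posdef => // i; case: (As i).
Qed.

Lemma J_fun_gauss_ratio (A : fam) : spd_family A ->
  (J_fun c B (gauss_family A) * ((prod_int c (gauss_family A))^-1)%:E)%E =
  (J_ratio c B A)%:E.
Proof. by move=> As; rewrite J_fun_gauss // prod_int_gauss. Qed.

(* Both [gauss_mass M * gauss_mass M^-1] and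
   [gauss_mass_prod A * gauss_mass_prod A^-1] equal pi^n. *)
Lemma I_fun_gauss_ratio (A : fam) : spd_family A ->
  (I_fun c B (gauss_family A) * ((prod_int c (gauss_family A))^-1)%:E)%E =
  ((J_ratio c B (inv_family A))^-1)%:E.
Proof.
move=> As; have As' := spd_inv_family As.
rewrite I_fun_gauss // prod_int_gauss // -EFinM; congr EFin.
set M := pullback_sum c B (inv_family A).
have Ms : M^T = M by apply: pullback_sum_sym => i; case: (As' i).
have Mpd : posdef M by apply: pullback_sum_posdef => // i; case: (As' i).
have GM := gauss_mass_invmx Ms Mpd; have GA := gauss_mass_prod_inv_family As.
have G0 := gauss_mass_gt0 Ms Mpd.
have PA := gauss_mass_prod_gt0 c As.
rewrite /J_ratio -/M invf_div; apply/eqP.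
by rewrite eqr_div ?(lt0r_neq0 PA) ?(lt0r_neq0 G0) // mulrC GM mulrC GA.
Qed.

Let ratios := [set J_ratio c B A | A in @spd_family R m nn].

Lemma F_g_J_ratio : F_g c B = ereal_sup (EFin @` ratios).
Proof.
rewrite /F_g image_gaussian_tuple image_comp; congr ereal_sup.
by apply: eq_imagel => A As; exact: J_fun_gauss_ratio.
Qed.

Lemma E_g_J_ratio : E_g c B = ereal_inf (EFin @` (GRing.inv @` ratios)).
Proof.
rewrite /E_g image_gaussian_tuple !image_comp -[in RHS]image_inv_family image_comp.
by congr ereal_inf; apply: eq_imagel => A As; exact: I_fun_gauss_ratio.
Qed.

End Duality.

Unset Implicit Arguments. Set Strict Implicit.

Theorem lemma2 (R : realType) (n m : nat) (nn : 'I_m -> nat) (c : 'I_m -> R)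
    (B : forall i : 'I_m, 'M[R]_(n, nn i)) :
  (n <= m)%N ->
  (forall i, 0 < c i) ->
  (forall i, 0 < nn i <= n)%N ->
  \sum_(i < m) c i * (nn i)%:R = n%:R ->
  (forall i (y : 'rV[R]_(nn i)), exists x : 'rV[R]_n, x *m B i = y) ->
  (forall x : 'rV[R]_n, (forall i, x *m B i = 0) -> x = 0) ->
  ((F_g c B < +oo)%E -> (E_g c B * F_g c B)%E = 1%E) /\
  (E_g c B = 0%E <-> F_g c B = +oo%E).
Proof.
move=> _ c_gt0 _ scaling _ B_inj.
rewrite (E_g_J_ratio c_gt0 B_inj scaling) (F_g_J_ratio c_gt0 B_inj).
apply: ereal_inf_inv_sup => [_ [A As <-]|]; first exact: J_ratio_gt0.
exists (J_ratio c B (fun i => 1%:M)), (fun i => 1%:M) => // i.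
by split; [exact: trmx1 | exact: posdef1].
Qed.
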